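(* Let $X$ be a real $n\times p$ matrix ($p<n$) of full rank with rows $x_1^\top,\dots,x_n^\top$, and define $$\kappa(X)=\max\Big\{|M| : M\subset\{1,\dots,n\},\ \exists\,\theta\in\mathbb{R}^p \text{ with } X\theta\neq 0 \text{ and } x_i^\top\theta=0\ \forall i\in M\Big\}.$$ Let $f\in\mathbb{R}^p$, $e\in\mathbb{R}^n$, $y=Xf+e$, let $F$ be a real matrix with $n$ columns such that $\ker(F)=\operatorname{ran}(X)$, and set $\tilde y=Fy$. If $\|e\|_0\leq (n-\kappa(X)-1)/2$, then $e$ is the unique solution of the problem $$\min_{s\in\mathbb{R}^n}\ \|s\|_0 \quad\text{subject to}\quad Fs=\tilde y.$$
   Context: For $x\in\mathbb{R}^n$, $\|x\|_0$ denotes the number of nonzero components of $x$, i.e. $\|x\|_0=|\{i\in\{1,\dots,n\}: x_i\neq 0\}|$. *)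

From HB Require Import structures.
From mathcomp Require Import all_boot all_order all_algebra.
From mathcomp Require Import boolp.
Set Implicit Arguments. Unset Strict Implicit. Unset Printing Implicit Defensive.
Import Order.TTheory GRing.Theory Num.Theory.
Local Open Scope ring_scope.

(* Vectors in R^n are column vectors 'cV[R]_n; x_i^T is row i X. *)

Definition l0 (R : realFieldType) (n : nat) (x : 'cV[R]_n) : nat :=
  #|[set i : 'I_n | x i ord0 != 0]|.

Definition kappa_adm (R : realFieldType) (n p : nat) (X : 'M[R]_(n, p))
  (M : {set 'I_n}) : Prop :=
  exists theta : 'cV[R]_p, X *m theta != 0 /\ forall i, i \in M -> row i X *m theta = 0.

(* kappa(X) = max of |M| over admissible M (0 if there is none). *)
Definition kappa (R : realFieldType) (n p : nat) (X : 'M[R]_(n, p)) : nat :=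
  \max_(M : {set 'I_n} | `[< kappa_adm X M >]) #|M|.

From HB Require Import structures.
From mathcomp Require Import all_boot all_order all_algebra.
From mathcomp Require Import boolp.
From mathcomp Require Import zify lra.
Import Order.TTheory GRing.Theory Num.Theory.
Local Open Scope ring_scope.

(* Every solution of [F s = F y] differs from [e] by some [X theta].  If
   [s <> e], the vector [X theta] is nonzero, so by definition of [kappa X]
   it has at most [kappa X] zero entries, i.e. [n <= ||s - e||_0 + kappa X].
   With [||s - e||_0 <= ||s||_0 + ||e||_0] and [2 ||e||_0 + kappa X < n]
   this forces [||e||_0 < ||s||_0]. *)

Section L0.
Variables (R : realFieldType) (n : nat).
Implicit Types x y : 'cV[R]_n.

Lemma l0N x : l0 (- x) = l0 x.
Proof. by apply: eq_card => i; rewrite !inE mxE oppr_eq0. Qed.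

Lemma l0D_le x y : (l0 (x + y) <= l0 x + l0 y)%N.
Proof.
rewrite /l0; apply: leq_trans (leq_card_setU _ _); apply: subset_leq_card.
apply/subsetP => i; rewrite !inE mxE.
by case: (eqVneq (x i ord0) 0) => [->|//]; rewrite add0r.
Qed.

Lemma l0B_le x y : (l0 (x - y) <= l0 x + l0 y)%N.
Proof. by rewrite -(l0N y); apply: l0D_le. Qed.

End L0.

Section Kappa.
Variables (R : realFieldType) (n p : nat) (X : 'M[R]_(n, p)).

Lemma kappa_adm_zeros (theta : 'cV[R]_p) :
  X *m theta != 0 -> kappa_adm X [set i | (X *m theta) i ord0 == 0].
Proof.
move=> nz_Xtheta; exists theta; split=> // i; rewrite inE => /eqP Xtheta_i.
by rewrite -row_mul; apply/matrixP => a b; rewrite [LHS]mxE (ord1 b) Xtheta_i mxE.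
Qed.

Lemma l0_mulmx_kappa (theta : 'cV[R]_p) :
  X *m theta != 0 -> (n <= l0 (X *m theta) + kappa X)%N.
Proof.
move=> /kappa_adm_zeros adm.
set zeros := [set i | _ == 0] in adm.
have le_zeros : (#|zeros| <= kappa X)%N.
  by apply: (leq_bigmax_cond (F := fun M : {set 'I_n} => #|M|)); apply/asboolP.
rewrite -[X in (X <= _)%N](card_ord n) -(cardsC zeros) addnC.
apply: leq_add le_zeros; apply: eq_leq; apply: eq_card => i.
by rewrite !inE.
Qed.

Lemma l0_lt_of_range_perturbation (e s : 'cV[R]_n) (theta : 'cV[R]_p) :
  ((l0 e).*2 + kappa X < n)%N -> s - e = X *m theta -> s != e ->
  (l0 e < l0 s)%N.
Proof.
move=> small_e def_theta; rewrite -subr_eq0 def_theta => /l0_mulmx_kappa.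
by rewrite -def_theta; have := @l0B_le _ _ s e; lia.
Qed.

End Kappa.

Theorem lemma2p1 (R : realFieldType) (n p m : nat) (X : 'M[R]_(n, p))
  (F : 'M[R]_(m, n)) (f : 'cV[R]_p) (e y : 'cV[R]_n) :
  (p < n)%N ->
  \rank X = p ->
  y = X *m f + e ->
  (forall s : 'cV[R]_n, F *m s = 0 <-> exists theta : 'cV[R]_p, s = X *m theta) ->
  (l0 e)%:R <= ((n%:R - (kappa X)%:R - 1) / 2 : R) ->
  [/\ F *m e = F *m y,
      (forall s : 'cV[R]_n, F *m s = F *m y -> (l0 e <= l0 s)%N) &
      (forall s : 'cV[R]_n, F *m s = F *m y -> (l0 s <= l0 e)%N -> s = e)].
Proof.
move=> _ _ def_y kerF small_e.
have {}small_e : ((l0 e).*2 + kappa X < n)%N.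
  rewrite -(ler_nat R) -addn1 !natrD -muln2 natrM.
  by rewrite ler_pdivlMr // in small_e; lra.
have Fe : F *m e = F *m y.
  have FXf : F *m (X *m f) = 0 by apply/kerF; exists f.
  by rewrite def_y mulmxDr FXf add0r.
have sparsest s : F *m s = F *m y -> s != e -> (l0 e < l0 s)%N.
  move=> Fs; have [theta def_theta] : exists theta, s - e = X *m theta.
    by apply/kerF; rewrite mulmxBr Fs Fe subrr.
  exact: l0_lt_of_range_perturbation def_theta.
split=> // s Fs; case: (eqVneq s e) => [-> //|ne_se].
- exact: ltnW (sparsest s Fs ne_se).
- by rewrite leqNgt sparsest.
Qed.
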